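(* Let $\mathcal{Z}=\mathcal{X}\times\mathcal{Y}$ with $\mathcal{X}\subseteq\mathbb{R}^d$, let $\mathcal{D}_S$ (source) and $\mathcal{D}_T$ (target) be probability distributions on $\mathcal{Z}$, let $S=\{\boldsymbol{z}_i\}_{i=1}^n$ be a training set of $n$ i.i.d. samples from $\mathcal{D}_S$, and let $\hat{\mathcal{D}}_T$ be an empirical sample of size $n$ drawn i.i.d. from $\mathcal{D}_T$. Assume the loss satisfies $0\le \ell_{\boldsymbol{\theta}}(\boldsymbol{z})\le M$ for all $\boldsymbol{z}\in\mathcal{Z}$. Then for every $\delta\in(0,1)$, with probability at least $1-\delta$ (over the choice of the samples), for every model $f_{\boldsymbol{\theta}}$ trained on $S$ that is $(K,\epsilon(S))$-robust with partition $\{C_i\}_{i=1}^K$, we have $$\mathcal{L}_T(f_{\boldsymbol{\theta}})\le \widehat{\mathcal{L}}_S(f_{\boldsymbol{\theta}})+M\, d_{(\epsilon,K)}(S,\hat{\mathcal{D}}_T)+2\epsilon(S)+3M\sqrt{\frac{2K\ln 2+2\ln(2/\delta)}{n}},$$ where $d_{(\epsilon,K)}(S,\hat{\mathcal{D}}_T):=\sum_{i=1}^K\left|\frac{n_i(S)}{n}-\frac{n_i(\hat{\mathcal{D}}_T)}{n}\right|$ and $n_i(S)$, $n_i(\hat{\mathcal{D}}_T)$ denote the numbers of samples of $S$ and of $\hat{\mathcal{D}}_T$, respectively, that fall into $C_i$.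
   Context: A model $f_{\boldsymbol{\theta}}$ with parameters $\boldsymbol{\theta}$ maps inputs $\boldsymbol{x}\in\mathcal{X}$ to $\mathbb{R}$; for $\boldsymbol{z}=(\boldsymbol{x},y)$ write $\ell_{\boldsymbol{\theta}}(\boldsymbol{z})=\ell(f(\boldsymbol{\theta},\boldsymbol{x}),y)$ for a loss $\ell:\mathbb{R}\times\mathbb{R}\to\mathbb{R}_+$. Expected risks: $\mathcal{L}_S(f_{\boldsymbol{\theta}})=\mathbb{E}_{\boldsymbol{z}\sim\mathcal{D}_S}[\ell_{\boldsymbol{\theta}}(\boldsymbol{z})]$, $\mathcal{L}_T(f_{\boldsymbol{\theta}})=\mathbb{E}_{\boldsymbol{z}\sim\mathcal{D}_T}[\ell_{\boldsymbol{\theta}}(\boldsymbol{z})]$; empirical source risk $\widehat{\mathcal{L}}_S(f_{\boldsymbol{\theta}})=\frac1n\sum_{\boldsymbol{z}_i\in S}\ell_{\boldsymbol{\theta}}(\boldsymbol{z}_i)$. Robustness (Xu–Mannor): a model $f_{\boldsymbol{\theta}}$ trained on $S$ is $(K,\epsilon(S))$-robust, for $K\in\mathbb{N}$, if $\mathcal{Z}$ can be partitioned into $K$ disjoint sets $\{C_i\}_{i=1}^K$ such that for all $\boldsymbol{s}\in S$ and $\boldsymbol{z}\in\mathcal{Z}$ and all $i\in[K]$: $\boldsymbol{s},\boldsymbol{z}\in C_i\Rightarrow|\ell_{\boldsymbol{\theta}}(\boldsymbol{s})-\ell_{\boldsymbol{\theta}}(\boldsymbol{z})|\le\epsilon(S)$.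 *)

From HB Require Import structures.
From mathcomp Require Import all_boot all_order all_algebra.
From mathcomp Require Import all_classical all_reals all_analysis.
Set Implicit Arguments. Unset Strict Implicit. Unset Printing Implicit Defensive.
Import Order.TTheory GRing.Theory Num.Theory.
Import numFieldNormedType.Exports.
Local Open Scope classical_set_scope.
Local Open Scope ring_scope.

(* Mutual independence of a finite family of random variables X i : Omega -> Z
   (product rule for every choice of measurable sets B i; for a finite
   family this covers all finite subfamilies by taking B j = setT). *)
Definition mutually_independent {d dZ : measure_display} {R : realType}
  {Omega : measurableType d} {Z : measurableType dZ}
  (P : probability Omega R) (I : finType) (X : I -> Omega -> Z) : Prop :=
  (forall i, measurable_fun setT (X i)) /\
  forall B : I -> set Z, (forall i, measurable (B i)) ->
    P (\bigcap_(i in [set: I]) (X i @^-1` B i)) =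
    (\prod_(i : I) P (X i @^-1` B i))%E.

Definition has_distribution {d dZ : measure_display} {R : realType}
  {Omega : measurableType d} {Z : measurableType dZ}
  (P : probability Omega R) (X : Omega -> Z) (D : probability Z R) : Prop :=
  forall B, measurable B -> P (X @^-1` B) = D B.

Definition is_partition {T : Type} (K : nat) (C : 'I_K -> set T) : Prop :=
  (forall i j, i != j -> C i `&` C j = set0) /\
  \bigcup_(i in [set: 'I_K]) C i = [set: T].

Definition robust_wrt {T : Type} {R : realType} (n K : nat) (C : 'I_K -> set T)
  (S : 'I_n -> T) (lth : T -> R) (eps : R) : Prop :=
  is_partition C /\
  forall (j : 'I_n) (z : T) (i : 'I_K), C i (S j) -> C i z ->
    `| lth (S j) - lth z | <= eps.

Definition ncount {T : Type} (n : nat) (S : 'I_n -> T) (A : set T) : nat :=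
  #|[set j : 'I_n | S j \in A]|.

Definition dist_eK {T : Type} {R : realType} (n K : nat) (C : 'I_K -> set T)
  (S Tt : 'I_n -> T) : R :=
  \sum_(i < K) `| (ncount S (C i))%:R / n%:R - (ncount Tt (C i))%:R / n%:R |.

Definition emp_risk {T : Type} {R : realType} (n : nat) (lth : T -> R)
  (S : 'I_n -> T) : R := (\sum_(j < n) lth (S j)) / n%:R.

From HB Require Import structures.
From mathcomp Require Import all_boot all_order all_algebra.
From mathcomp Require Import all_classical all_reals all_analysis.
From mathcomp Require Import measurable_realfun ring lra.
Import Order.TTheory GRing.Theory Num.Theory.
Import numFieldNormedType.Exports.
Local Open Scope classical_set_scope.
Local Open Scope ring_scope.

(* Split the target risk along the cells C_i. On a cell holding sample points,
   robustness bounds the loss by the cell's empirical mean plus eps; on an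
   empty cell it is bounded by M. Hence
     L_T <= emp_risk + eps + M sum_i |D_T(C_i) - n_i(S)/n|,
   and the triangle inequality turns the last sum into d_(eps,K)(S, T^) plus
   the l1 deviation of the target frequencies from the D_T(C_i). That deviation
   is twice the largest excess of empirical over true mass on a union of
   cells. For each of the 2^K unions the target count is binomial, so a
   Chernoff bound (tilt s = u/3, using e^s <= 1 + s + s^2) and a union bound
   keep every excess below u = (3/2) sqrt(L/n) with probability >= 1 - delta.
   The source sample is never treated as random. *)

Lemma measure_bigsetU_le {d} {T : measurableType d} {R : realType}
    (mu : {measure set T -> \bar R}) {I : Type} {r : seq I} {P : pred I}
    {F : I -> set T} :
  (forall i, measurable (F i)) ->
  (mu (\big[setU/set0]_(i <- r | P i) F i) <= \sum_(i <- r | P i) mu (F i))%E.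
Proof.
move=> mF; elim: r => [|i r IH]; first by rewrite !big_nil measure0.
rewrite !big_cons; case: (P i) => //.
apply: le_trans (measureU2 _ _ _) _ => //; first exact: bigsetU_measurable.
exact: leeD2l.
Qed.

Lemma probability_fineE {d} {T : measurableType d} {R : realType}
    (P : probability T R) {A : set T} :
  measurable A -> P A = (fine (P A))%:E.
Proof. by move=> mA; rewrite fineK// fin_num_measure. Qed.

Lemma expR_le1DxDsqr (R : realType) (x : R) :
  0 <= x <= 3^-1 -> expR x <= 1 + x + x ^+ 2.
Proof.
case/andP=> x_ge0 x_le.
have y_gt0 : 0 < 1 - x / 2 by lra.
(* [expR x = expR (- (x / 2)) ^- 2 <= (1 - x / 2) ^- 2] *)
have y_le : 1 - x / 2 <= expR (- (x / 2)) by exact: expR_ge1Dx.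
have expRxE : expR x * expR (- (x / 2)) ^+ 2 = 1.
  by rewrite -expRM_natl -expRD (_ : _ + _ = 0) ?expR0//; lra.
have poly_ge1 : 1 <= (1 + x + x ^+ 2) * (1 - x / 2) ^+ 2.
  have -> : (1 + x + x ^+ 2) * (1 - x / 2) ^+ 2
            = 1 + x ^+ 2 / 4 * (1 - 3 * x + x ^+ 2) by field.
  by rewrite lerDl mulr_ge0 ?divr_ge0 ?sqr_ge0//; nra.
have sq_le : (1 - x / 2) ^+ 2 <= expR (- (x / 2)) ^+ 2.
  by rewrite lerXn2r// ?nnegrE ?expR_ge0// ltW.
rewrite -(ler_pM2r (exprn_gt0 2 y_gt0)).
apply: le_trans poly_ge1; rewrite -[leRHS]expRxE.
by rewrite ler_wpM2l ?expR_ge0.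
Qed.

Lemma sum_ffun_prod_if (R : comPzSemiRingType) (n : nat) (x y : R) :
  \sum_(b : {ffun 'I_n -> bool}) \prod_j (if b j then x else y) = (x + y) ^+ n.
Proof.
rewrite -(bigA_distr_bigA (fun _ (c : bool) => if c then x else y)) /=.
by under eq_bigr do rewrite big_bool; rewrite prodr_const card_ord.
Qed.

Lemma binomial_mgf (R : realType) (n : nat) (q s : R) :
  \sum_(b : {ffun 'I_n -> bool})
     expR (s * #|[pred j | b j]|%:R) * \prod_j (if b j then q else 1 - q)
  = (q * expR s + (1 - q)) ^+ n.
Proof.
rewrite -sum_ffun_prod_if; apply: eq_bigr => b _.
rewrite expRM_natr -prodr_const big_mkcond /= -big_split /=.
by apply: eq_bigr => j _; rewrite inE; case: (b j); rewrite ?mul1r// mulrC.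
Qed.

Lemma binomial_upper_tail_le (R : realType) (n : nat) (q u : R) :
  (0 < n)%N -> 0 <= q <= 1 -> 0 < u ->
  \sum_(b : {ffun 'I_n -> bool} | n%:R * (q + u) <= #|[pred j | b j]|%:R)
     \prod_j (if b j then q else 1 - q) <= expR (- (2 / 9) * n%:R * u ^+ 2).
Proof.
move=> n_gt0 /andP[q_ge0 q_le1] u_gt0.
set thr := n%:R * (q + u).
pose hits (b : {ffun 'I_n -> bool}) : R := #|[pred j | b j]|%:R.
have w_ge0 (b : {ffun 'I_n -> bool}) : 0 <= \prod_j (if b j then q else 1 - q).
  by apply: prodr_ge0 => j _; case: (b j) => //; lra.
have [u_le1|u_gt1] := leP u 1; last first.
  rewrite big_pred0 ?expR_ge0// => b; apply/negbTE; rewrite -ltNge.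
  have : (#|[pred j | b j]| <= n)%N.
    by rewrite -[X in (_ <= X)%N]card_ord max_card.
  rewrite -(ler_nat R) => /le_lt_trans; apply.
  have : 1 <= n%:R :> R by rewrite ler1n.
  by rewrite /thr; nra.
(* [s = u / 3] minimises the exponent [- s u + s ^+ 2] of the Chernoff bound *)
set s := u / 3.
have s_ge0 : 0 <= s by rewrite /s; lra.
apply: (@le_trans _ _ (\sum_(b : {ffun 'I_n -> bool})
          expR (s * (hits b - thr)) * \prod_j (if b j then q else 1 - q))).
  rewrite [leRHS](bigID (fun b : {ffun 'I_n -> bool} => thr <= hits b)) /=.
  apply: ler_wpDr; first by apply: sumr_ge0 => b _; rewrite mulr_ge0 ?expR_ge0.
  apply: ler_sum => b thr_le; rewrite ler_peMl//.
  by apply: le_trans (expR_ge1Dx _); rewrite lerDl mulr_ge0// subr_ge0.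
under eq_bigr do rewrite mulrBr expRD mulrAC.
rewrite -mulr_suml binomial_mgf mulrC.
have es_ge1 : 1 <= expR s by apply: le_trans (expR_ge1Dx _); rewrite lerDl.
have es_le := @expR_le1DxDsqr _ s ltac:(rewrite s_ge0 /s; lra).
have base_le : q * expR s + (1 - q) <= expR (q * (s + s ^+ 2)).
  by apply: le_trans (expR_ge1Dx _); nra.
apply: (@le_trans _ _ (expR (- (s * thr)) * expR (n%:R * (q * (s + s ^+ 2))))).
  by rewrite ler_wpM2l ?expR_ge0// expRM_natl lerXn2r// nnegrE ?expR_ge0//; nra.
rewrite -expRD ler_expR /thr /s.
have : 0 <= n%:R * u ^+ 2 * (1 - q) by rewrite !mulr_ge0 ?subr_ge0// ltW.
nra.
Qed.

Lemma card_finset (T : finType) : #|{set T}| = (2 ^ #|T|)%N.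
Proof.
rewrite -cardsT -cardsT -card_powerset; congr #|pred_of_set _|.
by apply/setP => A; rewrite powersetE finset.subsetT finset.in_setT.
Qed.

Lemma sum_dist_le_of_subsums (R : realDomainType) (I : finType) (p h : I -> R)
    (u : R) :
  \sum_i p i = \sum_i h i ->
  (forall A : {set I}, \sum_(i in A) (h i - p i) <= u) ->
  \sum_i `|p i - h i| <= 2 * u.
Proof.
move=> sum_eq subsum_le.
set A := [set i | p i < h i]%SET.
have -> : \sum_i `|p i - h i|
          = 2 * \sum_(i in A) (h i - p i) - \sum_i (h i - p i).
  rewrite (big_mkcond (fun i => i \in A)) mulr_sumr -sumrB.
  apply: eq_bigr => i _; rewrite inE.
  case: ltP => [p_lt|h_le]; last by rewrite ger0_norm ?subr_ge0//; ring.
  by rewrite distrC ger0_norm ?subr_ge0 ?ltW//; ring.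
have -> : \sum_i (h i - p i) = 0 by rewrite sumrB sum_eq subrr.
by rewrite subr0 ler_pM2l.
Qed.

Lemma ncountE (T : Type) (n : nat) (S : 'I_n -> T) (A : set T) :
  ncount S A = #|[pred j | S j \in A]|.
Proof. by apply: eq_card => j; apply/idP/idP => [/set_mem|/mem_set]. Qed.

Lemma ncount_natrE (R : pzSemiRingType) (T : Type) (n : nat) (S : 'I_n -> T)
    (A : set T) :
  (ncount S A)%:R = \sum_(j | S j \in A) 1 :> R.
Proof. by rewrite ncountE sumr_const. Qed.

Definition freq {T : Type} {R : realType} {n : nat} (S : 'I_n -> T)
    (A : set T) : R :=
  (ncount S A)%:R / n%:R.

Definition hit_event {Omega Z : Type} {n : nat} (T : 'I_n -> Omega -> Z)
    (B : set Z) (b : {ffun 'I_n -> bool}) : set Omega :=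
  \bigcap_(j in [set: 'I_n]) (T j @^-1` (if b j then B else ~` B)).

Definition count_ge {Omega Z : Type} {R : realType} {n : nat}
    (T : 'I_n -> Omega -> Z) (B : set Z) (t : R) : set Omega :=
  [set w | t <= (ncount (T ^~ w) B)%:R].

Section HitEvents.
Context {Omega Z : Type} {n : nat} (T : 'I_n -> Omega -> Z).

Lemma hit_event_sample B w : hit_event T B [ffun j => T j w \in B] w.
Proof.
move=> j _ /=; rewrite ffunE; case: ifPn => [/set_mem //|].
by move=> /negP TjB TjwB; apply: TjB; exact: mem_set.
Qed.

Lemma ncount_hit_event {B b w} :
  hit_event T B b w -> ncount (T ^~ w) B = #|[pred j | b j]|.
Proof.
move=> hit; rewrite ncountE; apply: eq_card => j; rewrite !inE.
have := hit j I; case: (b j) => /= [/mem_set //|TjwB].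
by apply/negbTE/negP => /set_mem.
Qed.

Lemma count_geE {R : realType} B (t : R) : count_ge T B t =
  \big[setU/set0]_(b : {ffun 'I_n -> bool} | t <= #|[pred j | b j]|%:R)
    hit_event T B b.
Proof.
rewrite -bigcup_seq_cond; apply/seteqP; split => w /=.
  move=> t_le; exists [ffun j => T j w \in B]; last exact: hit_event_sample.
  by rewrite /= mem_index_enum -(ncount_hit_event (hit_event_sample B w)).
move=> [b /= /andP[_ t_le] /ncount_hit_event hitE].
by rewrite /count_ge /= hitE.
Qed.

End HitEvents.

Section SampleHits.
Context {dO dZ : measure_display} {Omega : measurableType dO}
  {Z : measurableType dZ} {R : realType}.
Context {P : probability Omega R} {D : probability Z R} {n : nat}
  {T : 'I_n -> Omega -> Z}.
Hypotheses (T_indep : mutually_independent P T)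
  (T_dist : forall j, has_distribution P (T j) D).

Lemma hit_event_measurable B b : measurable B -> measurable (hit_event T B b).
Proof.
move=> mB; apply: fin_bigcap_measurable => [|j _]; first exact: finite_finset.
rewrite -[_ @^-1` _]setTI; apply: T_indep.1 => //.
by case: (b j) => //; exact: measurableC.
Qed.

Lemma probability_hit_event B b : measurable B ->
  P (hit_event T B b)
  = (\prod_j (if b j then fine (D B) else 1 - fine (D B)))%:E.
Proof.
move=> mB; rewrite /hit_event T_indep.2 => [|j]; last first.
  by case: (b j) => //; exact: measurableC.
rewrite -prodEFin; apply: eq_bigr => j _.
case: (b j); first by rewrite T_dist// -probability_fineE.
rewrite (T_dist _ _ (measurableC mB)) probability_setC//.
by rewrite EFinB -probability_fineE.
Qed.

Lemma count_ge_measurable B (t : R) :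
  measurable B -> measurable (count_ge T B t).
Proof.
move=> mB; rewrite count_geE; apply: bigsetU_measurable => b _.
exact: hit_event_measurable.
Qed.

Lemma chernoff_count_ge B u : (0 < n)%N -> measurable B -> 0 < u ->
  (P (count_ge T B (n%:R * (fine (D B) + u)))
   <= (expR (- (2 / 9) * n%:R * u ^+ 2))%:E)%E.
Proof.
move=> n_gt0 mB u_gt0; rewrite count_geE.
apply: le_trans (measure_bigsetU_le P _) _ => [b|].
  exact: hit_event_measurable.
rewrite (eq_bigr _ (fun b _ => probability_hit_event B b mB)).
rewrite sumEFin lee_fin binomial_upper_tail_le//.
by rewrite -!lee_fin -probability_fineE// measure_ge0 probability_le1.
Qed.

End SampleHits.

Definition cells {T : Type} {K : nat} (C : 'I_K -> set T) (A : {set 'I_K}) :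
  set T := \big[setU/set0]_(i in A) C i.

Section Partition.
Context {T : Type} {K : nat} {C : 'I_K -> set T}.
Hypothesis C_part : is_partition C.

Lemma partition_cover z : exists i, C i z.
Proof.
have : [set: T] z by [].
by rewrite -C_part.2 => -[i _ Ciz]; exists i.
Qed.

Lemma partition_eq {i j z} : C i z -> C j z -> i = j.
Proof.
move=> Ciz Cjz; apply/eqP; apply: contraT => /C_part.1 Cij0.
by have : (C i `&` C j) z by []; rewrite Cij0.
Qed.

Lemma mem_cells A {i z} : C i z -> (z \in cells C A) = (i \in A).
Proof.
move=> Ciz; apply/idP/idP => [/set_mem|iA]; last first.
  apply/mem_set; rewrite /cells -bigcup_seq_cond.
  by exists i => //=; rewrite mem_index_enum.
rewrite /cells -bigcup_seq_cond => -[j /= /andP[_ jA] Cjz].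
by rewrite (partition_eq Ciz Cjz).
Qed.

Lemma cellsT : cells C [set: 'I_K]%SET = [set: T].
Proof.
apply/seteqP; split => // z _; have [i Ciz] := partition_cover z.
by apply/set_mem; rewrite (mem_cells _ Ciz) inE.
Qed.

Lemma sum_cells (V : nmodType) (n : nat) (S : 'I_n -> T) (F : 'I_n -> V)
    (A : {set 'I_K}) :
  \sum_(i in A) \sum_(j | S j \in C i) F j = \sum_(j | S j \in cells C A) F j.
Proof.
rewrite (exchange_big_dep (fun j => S j \in cells C A)) /=; last first.
  by move=> i j iA /set_mem Cij; rewrite (mem_cells A Cij).
apply: eq_bigr => j; have [i0 Ci0] := partition_cover (S j).
rewrite (mem_cells A Ci0) => i0A; rewrite (big_pred1 i0)// => i /=.
case: (eqVneq i i0) => [->|ne]; first by rewrite i0A mem_set.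
apply/negbTE; rewrite negb_and; apply/orP; right; apply/negP => /set_mem Ci.
by rewrite (partition_eq Ci Ci0) eqxx in ne.
Qed.

Lemma sum_partition (V : nmodType) (n : nat) (S : 'I_n -> T) (F : 'I_n -> V) :
  \sum_i \sum_(j | S j \in C i) F j = \sum_j F j.
Proof.
transitivity (\sum_(i in [set: 'I_K]%SET) \sum_(j | S j \in C i) F j).
  by apply: eq_bigl => i; rewrite inE.
by rewrite sum_cells cellsT; apply: eq_bigl => j; rewrite in_setT.
Qed.

Lemma ncount_cells (R : pzSemiRingType) (n : nat) (S : 'I_n -> T)
    (A : {set 'I_K}) :
  (ncount S (cells C A))%:R = \sum_(i in A) (ncount S (C i))%:R :> R.
Proof.
by rewrite ncount_natrE -sum_cells; apply: eq_bigr => i _; rewrite ncount_natrE.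
Qed.

Lemma sum_ncount (R : pzSemiRingType) (n : nat) (S : 'I_n -> T) :
  \sum_i (ncount S (C i))%:R = n%:R :> R.
Proof.
under eq_bigr do rewrite ncount_natrE.
by rewrite sum_partition sumr_const card_ord.
Qed.

End Partition.

Section CellProbabilities.
Context {d : measure_display} {Z : measurableType d} {R : realType}.
Variable D : probability Z R.
Context {K : nat} {C : 'I_K -> set Z}.
Hypotheses (C_meas : forall i, measurable (C i)) (C_part : is_partition C).

Lemma cells_measurable A : measurable (cells C A).
Proof. by apply: bigsetU_measurable => i _; exact: C_meas. Qed.

Lemma probability_cells A : D (cells C A) = (\sum_(i in A) fine (D (C i)))%:E.
Proof.
rewrite measure_bigsetU_ord_cond => [|i _|i j _ _ [z [Ciz Cjz]]].
- by rewrite -sumEFin; apply: eq_bigr => i _; exact: probability_fineE.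
- exact: C_meas.
- exact: (partition_eq C_part Ciz Cjz).
Qed.

Lemma sum_cell_probability : \sum_i fine (D (C i)) = 1.
Proof.
have /eqP := probability_setT D; rewrite -(cellsT C_part) probability_cells.
by rewrite eqe => /eqP <-; apply: eq_bigl => i; rewrite inE.
Qed.

Lemma integral_partition (f : Z -> R) : measurable_fun setT f ->
  (\int[D]_z (f z)%:E = \sum_i \int[D]_(z in C i) (f z)%:E)%E.
Proof.
move=> f_meas; have cover : [set: Z] = \big[setU/set0]_(i < K) C i.
  by rewrite -(cellsT C_part); apply: eq_bigl => i; rewrite inE.
rewrite cover integral_bigsetU_EFin// => [|i j _ _ [z [Ciz Cjz]]|].
- exact: index_enum_uniq.
- exact: (partition_eq C_part Ciz Cjz).
- by rewrite -cover; exact/measurable_EFinP.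
Qed.

Lemma integral_le_sum_cells {f : Z -> R} {g : 'I_K -> R} :
  measurable_fun setT f -> (forall z, 0 <= f z) ->
  (forall i z, C i z -> f z <= g i) ->
  (\int[D]_z (f z)%:E <= (\sum_i g i * fine (D (C i)))%:E)%E.
Proof.
move=> f_meas f_ge0 f_le; rewrite integral_partition// -sumEFin.
apply: lee_sum => i _; rewrite EFinM -(probability_fineE D (C_meas i)).
rewrite -integral_cst//; apply: ge0_le_integral => //.
- by move=> z _; rewrite lee_fin.
- by apply/measurable_EFinP; exact: measurable_funS f_meas.
- by move=> z Ciz; rewrite lee_fin; exact: f_le.
Qed.

End CellProbabilities.

Definition deviation_event {dO dZ : measure_display} {Omega : measurableType dO}
    {Z : measurableType dZ} {R : realType} (D : probability Z R) {n K : nat}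
    (T : 'I_n -> Omega -> Z) (C : 'I_K -> set Z) (u : R) : set Omega :=
  \big[setU/set0]_(A : {set 'I_K})
     count_ge T (cells C A) (n%:R * (fine (D (cells C A)) + u)).

Section CellDeviation.
Context {dO dZ : measure_display} {Omega : measurableType dO}
  {Z : measurableType dZ} {R : realType}.
Context {P : probability Omega R} {D : probability Z R} {n : nat}
  {T : 'I_n -> Omega -> Z} {K : nat} {C : 'I_K -> set Z}.
Hypotheses (T_indep : mutually_independent P T)
  (T_dist : forall j, has_distribution P (T j) D) (n_gt0 : (0 < n)%N).
Hypotheses (C_meas : forall i, measurable (C i)) (C_part : is_partition C).

Lemma deviation_event_measurable u : measurable (deviation_event D T C u).
Proof.
apply: bigsetU_measurable => A _; apply: count_ge_measurable T_indep _ _ _.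
exact: cells_measurable.
Qed.

Lemma probability_deviation_event_le u : 0 < u ->
  (P (deviation_event D T C u)
   <= (2 ^+ K * expR (- (2 / 9) * n%:R * u ^+ 2))%:E)%E.
Proof.
move=> u_gt0; apply: le_trans (measure_bigsetU_le P _) _ => [A|].
  exact: count_ge_measurable T_indep _ _ (cells_measurable C_meas A).
apply: le_trans (lee_sum _ (fun A _ => chernoff_count_ge T_indep T_dist
  (cells C A) u n_gt0 (cells_measurable C_meas A) u_gt0)) _.
set e := expR _.
by rewrite sumEFin sumr_const card_finset card_ord -natrX mulr_natl.
Qed.

Lemma sum_dist_freq_le {u w} : ~ deviation_event D T C u w ->
  \sum_i `|fine (D (C i)) - freq (T ^~ w) (C i)| <= 2 * u.
Proof.
move=> not_dev; have n_pos : 0 < n%:R :> R by rewrite ltr0n.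
apply: sum_dist_le_of_subsums => [|A].
  by rewrite sum_cell_probability// -mulr_suml sum_ncount// divff// gt_eqF.
have : ~ count_ge T (cells C A) (n%:R * (fine (D (cells C A)) + u)) w.
  move=> dev; apply: not_dev; rewrite /deviation_event -bigcup_seq_cond.
  by exists A => //=; rewrite mem_index_enum.
rewrite /count_ge /= ncount_cells// probability_cells// /= => /negP.
rewrite -ltNge sumrB -mulr_suml lerBlDr ler_pdivrMr// => ns_lt.
by rewrite mulrC addrC ltW.
Qed.

Lemma cell_freq_concentration (delta : R) : 0 < delta < 1 ->
  exists E : set Omega, measurable E /\ (P E >= (1 - delta)%:E)%E /\
    forall w, E w -> \sum_i `|fine (D (C i)) - freq (T ^~ w) (C i)|
      <= 3 * Num.sqrt ((2 * K%:R * ln 2 + 2 * ln (2 / delta)) / n%:R).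
Proof.
case/andP=> delta_gt0 delta_lt1.
set L := 2 * K%:R * ln 2 + 2 * ln (2 / delta).
have n_pos : 0 < n%:R :> R by rewrite ltr0n.
have L_gt0 : 0 < L.
  have : 0 < ln (2 / delta) :> R by rewrite ln_gt0// ltr_pdivlMr//; lra.
  have : 0 <= ln 2 :> R by rewrite ln_ge0//; lra.
  have : 0 <= K%:R :> R by [].
  by rewrite /L; nra.
set u := 3 / 2 * Num.sqrt (L / n%:R).
have u_gt0 : 0 < u by rewrite mulr_gt0// sqrtr_gt0 divr_gt0.
(* [u] makes the union bound over the [2 ^ K] unions of cells [delta / 2] *)
have tail_eq : 2 ^+ K * expR (- (2 / 9) * n%:R * u ^+ 2) = delta / 2.
  have -> : - (2 / 9) * n%:R * u ^+ 2 = - (K%:R * ln 2) - ln (2 / delta).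
    rewrite /u exprMn sqr_sqrtr ?divr_ge0 ?ltW// /L; field.
    by rewrite gt_eqF.
  rewrite expRD expRN expRM_natl lnK ?posrE// expRN lnK ?posrE ?divr_gt0//.
  by field; rewrite gt_eqF// expf_neq0.
have dev_le := probability_deviation_event_le _ u_gt0.
rewrite tail_eq in dev_le.
have dev_meas : measurable (deviation_event D T C u) :=
  deviation_event_measurable u.
exists (~` deviation_event D T C u); split; first exact: measurableC.
split=> [|w not_dev]; last first.
  by apply: le_trans (sum_dist_freq_le not_dev) _; rewrite /u; lra.
rewrite probability_setC// (probability_fineE P dev_meas) -EFinB lee_fin.
by rewrite (probability_fineE P dev_meas) lee_fin in dev_le; lra.
Qed.

End CellDeviation.

Lemma robust_eps_ge0 {T : Type} {R : realType} {n K : nat} {C : 'I_K -> set T}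
    {S : 'I_n -> T} {l : T -> R} {eps : R} :
  (0 < n)%N -> robust_wrt C S l eps -> 0 <= eps.
Proof.
move=> n_gt0 [C_part rob].
have [i Ci] := partition_cover C_part (S (Ordinal n_gt0)).
by have := rob _ _ _ Ci Ci; rewrite subrr normr0.
Qed.

Section RobustRisk.
Context {d : measure_display} {Z : measurableType d} {R : realType}.
Context {l : Z -> R} {M : R}.
Hypothesis l_bound : forall z, 0 <= l z <= M.
Context {n K : nat} {S : 'I_n -> Z} {C : 'I_K -> set Z} {eps : R}.
Hypotheses (n_gt0 : (0 < n)%N) (rob : robust_wrt C S l eps).

Lemma robust_cell_bound : exists g : 'I_K -> R,
  [/\ forall i, 0 <= g i <= M, forall i z, C i z -> l z <= g i
    & forall i, (ncount S (C i))%:R * g i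
                <= \sum_(j | S j \in C i) l (S j) + (ncount S (C i))%:R * eps].
Proof.
have [C_part S_rob] := rob; have eps_ge0 := robust_eps_ge0 n_gt0 rob.
have M_ge0 : 0 <= M.
  by case/andP: (l_bound (S (Ordinal n_gt0))); exact: le_trans.
pose ns i : R := (ncount S (C i))%:R.
pose c i := \sum_(j | S j \in C i) l (S j).
(* an empty cell is bounded by [M], any other by its sample mean plus [eps] *)
exists (fun i => if ns i == 0 then M else Num.min M (c i / ns i + eps)).
split=> [i|i z Ciz|i]; case: eqVneq => [ns0|ns_neq0] //=.
- by rewrite M_ge0 lexx.
- rewrite le_min M_ge0 addr_ge0 ?divr_ge0 ?ge_min ?lexx//.
  by apply: sumr_ge0 => j _; case/andP: (l_bound (S j)).
- by case/andP: (l_bound z).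
- have ns_gt0 : 0 < ns i by rewrite lt0r ns_neq0 ler0n.
  rewrite le_min; case/andP: (l_bound z) => _ -> /=.
  rewrite -lerBlDr ler_pdivlMr// /ns ncount_natrE mulr_sumr /c.
  apply: ler_sum => j /set_mem CiSj; rewrite mulr1.
  by have := S_rob j z i CiSj Ciz; rewrite ler_norml => /andP[+ _]; lra.
- rewrite -/(ns i) ns0 !mul0r addr0.
  by apply: sumr_ge0 => j _; case/andP: (l_bound (S j)).
- apply: le_trans (ler_wpM2l (ler0n _ _) (_ : _ <= c i / ns i + eps)) _.
    by rewrite ge_min lexx orbT.
  by rewrite mulrDr mulrCA divff ?mulr1.
Qed.

Lemma robust_risk_le (D : probability Z R) :
  measurable_fun setT l -> (forall i, measurable (C i)) ->
  (\int[D]_z (l z)%:E <= (emp_risk l S + eps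
     + M * \sum_i `|fine (D (C i)) - freq S (C i)|)%:E)%E.
Proof.
move=> l_meas C_meas; have [C_part _] := rob.
have n_pos : 0 < n%:R :> R by rewrite ltr0n.
have [g [g_bound l_le_g ns_g_le]] := robust_cell_bound.
apply: le_trans (integral_le_sum_cells D C_meas C_part l_meas _ l_le_g) _.
  by move=> z; case/andP: (l_bound z).
rewrite lee_fin (_ : \sum_i _ = \sum_i g i * freq S (C i)
                     + \sum_i g i * (fine (D (C i)) - freq S (C i)));
  last by rewrite -big_split; apply: eq_bigr => i _ /=; ring.
apply: lerD.
  have -> : emp_risk l S + eps = (\sum_i (\sum_(j | S j \in C i) l (S j)
                                     + (ncount S (C i))%:R * eps)) / n%:R.
    rewrite /emp_risk -(sum_partition C_part _ _ S) big_split /= -mulr_suml.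
    by rewrite sum_ncount//; field; rewrite gt_eqF.
  have -> : \sum_i g i * freq S (C i)
            = (\sum_i (ncount S (C i))%:R * g i) / n%:R.
    by rewrite mulr_suml; apply: eq_bigr => i _; rewrite mulrCA mulrA.
  by rewrite ler_pM2r ?invr_gt0//; apply: ler_sum => i _; exact: ns_g_le.
rewrite mulr_sumr; apply: ler_sum => i _; have /andP[g_ge0 g_le] := g_bound i.
apply: le_trans (ler_wpM2l g_ge0 (ler_norm _)) _.
by rewrite ler_wpM2r.
Qed.

End RobustRisk.

Lemma mutually_independent_inr {d dZ : measure_display} {R : realType}
    {Omega : measurableType d} {Z : measurableType dZ} {P : probability Omega R}
    {I J : finType} {X : I -> Omega -> Z} {Y : J -> Omega -> Z} :
  mutually_independent P
    (fun k : I + J => match k with inl i => X i | inr j => Y j end) ->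
  mutually_independent P Y.
Proof.
move=> [XY_meas XY_prod]; split=> [j|B B_meas]; first exact: XY_meas (inr j).
pose B' (k : I + J) := if k is inr j then B j else [set: Z].
have := XY_prod B' (fun k => if k is inr j then B_meas j else measurableT).
rewrite big_sumType /= big1 ?mul1e => [<-|i _]; last first.
  by rewrite preimage_setT probability_setT.
congr (P _); apply/seteqP; split => w w_in.
  by case=> [i|j] _ //=; exact: w_in.
by move=> j _; exact: (w_in (inr j)).
Qed.

Theorem theorem1 (R : realType)
  (dO : measure_display) (Omega : measurableType dO) (P : probability Omega R)
  (dX dY : measure_display) (X : measurableType dX) (Y : measurableType dY)
  (Theta : Type) (f : Theta -> X -> R) (loss : R -> Y -> R) (M : R)
  (hloss_meas : forall th : Theta,
     measurable_fun [set: X * Y] (fun z : X * Y => loss (f th z.1) z.2))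
  (hloss_bd : forall (th : Theta) (z : X * Y),
     0 <= loss (f th z.1) z.2 <= M)
  (DS DT : probability (X * Y)%type R)
  (n : nat) (hn : (0 < n)%N)
  (Ssamp Tsamp : 'I_n -> Omega -> (X * Y)%type)
  (hindep : mutually_independent P
     (fun k : ('I_n + 'I_n)%type =>
        match k with inl j => Ssamp j | inr j => Tsamp j end))
  (hSdist : forall j, has_distribution P (Ssamp j) DS)
  (hTdist : forall j, has_distribution P (Tsamp j) DT)
  (K : nat) (C : 'I_K -> set (X * Y)%type)
  (hC_meas : forall i, measurable (C i)) (hC_part : is_partition C)
  (delta : R) (hdelta : 0 < delta < 1) :
  exists E : set Omega, measurable E /\ (P E >= (1 - delta)%:E)%E /\
    forall w, E w ->
    forall (th : Theta) (eps : R),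
      robust_wrt C (fun j => Ssamp j w) (fun z => loss (f th z.1) z.2) eps ->
      (\int[DT]_z (loss (f th z.1) z.2)%:E <=
        (emp_risk (fun z => loss (f th z.1) z.2) (fun j => Ssamp j w)
         + M * dist_eK C (fun j => Ssamp j w) (fun j => Tsamp j w)
         + 2 * eps
         + 3 * M * Num.sqrt ((2 * K%:R * ln 2 + 2 * ln (2 / delta)) / n%:R))%:E)%E.
Proof.
have [E [E_meas [PE E_conc]]] := cell_freq_concentration
  (mutually_independent_inr hindep) hTdist hn hC_meas hC_part _ hdelta.
exists E; split=> //; split=> // w Ew th eps rob.
have eps_ge0 := robust_eps_ge0 hn rob.
have M_ge0 : 0 <= M.
  by case/andP: (hloss_bd th (Ssamp (Ordinal hn) w)); exact: le_trans.
apply: le_trans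
  (robust_risk_le (hloss_bd th) hn rob DT (hloss_meas th) hC_meas) _.
rewrite lee_fin.
have source_le : \sum_i `|fine (DT (C i)) - freq (Ssamp ^~ w) (C i)|
    <= dist_eK C (Ssamp ^~ w) (Tsamp ^~ w)
       + \sum_i `|fine (DT (C i)) - freq (Tsamp ^~ w) (C i)|.
  rewrite /dist_eK -big_split; apply: ler_sum => i _ /=.
  rewrite -/(freq (Ssamp ^~ w) (C i)) -/(freq (Tsamp ^~ w) (C i)).
  by rewrite (distrC (freq (Ssamp ^~ w) _)) [leRHS]addrC ler_distD.
have := ler_wpM2l M_ge0 source_le.
have := ler_wpM2l M_ge0 (E_conc w Ew).
lra.
Qed.
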